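(* Let $P$ be a finite poset and $\mathcal{J}\subseteq\mathrm{Hom}(P,\mathbb{N})$ a poset ideal with complement filter $\mathcal{J}^c$. The set of monomials in $L^p(\mathcal{J},P)$ is precisely $\{\overline{\Lambda}\phi:\phi\in\mathcal{J}^c\}$. Equivalently, the monomials of $k[x_P]$ not in $L^p(\mathcal{J},P)$ are precisely the $\overline{\Lambda}\phi$ for $\phi\in\mathcal{J}$.
   Context: $\mathbb{N}=\{0,1,\dots\}$; $\mathrm{Hom}(P,\mathbb{N})$ is the set of isotone maps $P\to\mathbb{N}$ ordered pointwise. The ascent is $\Lambda\phi=\{(p,i)\in P\times\mathbb{N}:\phi(q)\le i<\phi(p)\ \forall q<p\}$ and $\overline{\Lambda}\phi=\prod_{(p,i)\in\Lambda\phi}x_p\in k[x_P]$, $k$ a field. The letterplace ideal $L(\mathcal{J},P)\subseteq k[x_{P\times\mathbb{N}}]$ is generated by the monomials $\prod_{(p,i)\in\Lambda\phi}x_{p,i}$ for $\phi\in\mathcal{J}^c$, and $L^p(\mathcal{J},P)$ is the ideal of $k[x_P]$ generated by the images of these generators under $x_{p,i}\mapsto x_p$. *)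

From HB Require Import structures.
From mathcomp Require Import all_boot all_order all_algebra.
From mathcomp Require Import mpoly.
Set Implicit Arguments. Unset Strict Implicit. Unset Printing Implicit Defensive.
Import Order.Theory GRing.Theory.

(* The finite poset P is a [finPOrderType d]; the polynomial ring k[x_P] is
   {mpoly k[#|P|]}, the variable x_p being 'X_(enum_rank p). *)

Section Defs.
Context {d : Order.disp_t} (P : finPOrderType d) (k : fieldType).

Definition isotone (phi : {ffun P -> nat}) : Prop :=
  forall p q : P, (p <= q)%O -> (phi p <= phi q)%N.

Definition hom_ideal (J : {ffun P -> nat} -> Prop) : Prop :=
  (forall phi, J phi -> isotone phi) /\
  (forall phi psi : {ffun P -> nat}, isotone psi -> (forall p, (psi p <= phi p)%N) -> J phi -> J psi).

Definition compl_in_hom (J : {ffun P -> nat} -> Prop) (phi : {ffun P -> nat}) : Prop :=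
  isotone phi /\ ~ J phi.

Definition in_ascent (phi : {ffun P -> nat}) (p : P) (i : nat) : bool :=
  [forall q : P, (q < p)%O ==> (phi q <= i)%N] && (i < phi p)%N.

Definition xvar (p : P) : {mpoly k[#|P|]} := 'X_(enum_rank p).

(* \overline{Lambda} phi = prod_{(p,i) in Lambda phi} x_p ; note (p,i) in Lambda phi
   forces i < phi p, so the product is over a finite range. *)
Definition lambdabar (phi : {ffun P -> nat}) : {mpoly k[#|P|]} :=
  (\prod_(p : P) \prod_(i < phi p | in_ascent phi p i) xvar p)%R.

Definition in_ideal_gen n (G : {mpoly k[n]} -> Prop) (f : {mpoly k[n]}) : Prop :=
  exists s : seq ({mpoly k[n]} * {mpoly k[n]}),
    (forall x, x \in s -> G x.2) /\ f = (\sum_(x <- s) x.1 * x.2)%R.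

(* generators of L^p(J,P): images of the letterplace generators, i.e. lambdabar phi
   for phi in J^c *)
Definition Lp_gens (J : {ffun P -> nat} -> Prop) (g : {mpoly k[#|P|]}) : Prop :=
  exists phi, compl_in_hom J phi /\ g = lambdabar phi.

Definition in_Lp (J : {ffun P -> nat} -> Prop) (f : {mpoly k[#|P|]}) : Prop :=
  in_ideal_gen (Lp_gens J) f.

End Defs.

Arguments lambdabar {d P} k phi.
Arguments in_Lp {d P} k J f.

From HB Require Import structures.
From mathcomp Require Import all_boot all_order all_algebra.
From mathcomp Require Import mpoly.
From Stdlib Require Import Classical.
From mathcomp Require Import zify.

(* For isotone phi the variable x_p occurs in lambdabar phi with multiplicity
   phi p - max_{q<p} phi q.  These multiplicities determine phi, by recursion
   along the strict order of P, and every exponent vector arises, so phi |->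
   lambdabar phi is a bijection from isotone maps onto monomials; the same
   recursion shows that lambdabar psi | lambdabar phi forces psi <= phi.  A
   monomial lies in an ideal generated by monomials iff one of them divides
   it, so x^m lies in L^p(J,P) iff its unique preimage phi is above some psi
   outside J, i.e. iff phi itself is outside the down-closed set J. *)

Set Implicit Arguments. Unset Strict Implicit. Unset Printing Implicit Defensive.
Import Order.Theory GRing.Theory.

Lemma card_ord_geq N M : #|[pred i : 'I_N | M <= i]| = N - M.
Proof.
rewrite -sum1_card (eq_bigl (fun i : 'I_N => M <= i)) // -(big_mkord (leq M) (fun=> 1)).
elim: N => [|N IHN]; first by rewrite big_geq.
rewrite big_mkcond big_nat_recr //= -big_mkcond IHN; case: leqP; lia.
Qed.

Section AscentMultiplicities.
Context {d : Order.disp_t} (P : finPOrderType d).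
Implicit Types (phi psi : {ffun P -> nat}) (p q : P).

Definition sup_below phi p : nat := \max_(q | (q < p)%O) phi q.

Definition ascent_mult phi p : nat := phi p - sup_below phi p.

Lemma in_ascentE phi p i : in_ascent phi p i = (sup_below phi p <= i < phi p).
Proof.
rewrite /in_ascent; congr andb; by apply/forall_inP/bigmax_leqP => le_phi q lt_qp; apply: le_phi.
Qed.

Lemma card_ascent phi p :
  #|[pred i : 'I_(phi p) | in_ascent phi p i]| = ascent_mult phi p.
Proof.
rewrite /ascent_mult -card_ord_geq; apply: eq_card => i.
by rewrite !inE in_ascentE ltn_ord andbT.
Qed.

Lemma sup_below_le phi p : isotone phi -> sup_below phi p <= phi p.
Proof. by move=> phi_iso; apply/bigmax_leqP => q /ltW /phi_iso. Qed.

Definition height p : nat := #|[pred q : P | (q < p)%O]|.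

Lemma height_lt p q : (q < p)%O -> height q < height p.
Proof.
move=> lt_qp; apply/proper_card/properP; split.
  by apply/subsetP => r; rewrite !inE => /lt_trans; apply.
by exists q; rewrite !inE ?ltxx.
Qed.

Lemma height_max p : height p < #|P|.
Proof.
apply: (@proper_card _ _ predT); apply/properP.
by split; [apply/subsetP | exists p; rewrite ?inE ?ltxx].
Qed.

Lemma le_hom_of_ascent_mult psi phi : isotone psi -> isotone phi ->
  (forall p, ascent_mult psi p <= ascent_mult phi p) -> forall p, psi p <= phi p.
Proof.
move=> psi_iso phi_iso le_mult p.
have [h] := ubnP (height p); elim: h p => // h IH p /ltnSE le_ph.
have le_sup : sup_below psi p <= sup_below phi p.
  apply/bigmax_leqP => q lt_qp; apply: leq_trans (IH q _) _.
    exact: leq_trans (height_lt lt_qp) le_ph.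
  exact: (leq_bigmax_cond (P := fun r => (r < p)%O) (F := phi) q lt_qp).
have := le_mult p; have := sup_below_le p psi_iso; have := sup_below_le p phi_iso.
rewrite /ascent_mult; lia.
Qed.

(* The fuel [n] only needs to exceed the height of [p], see [hom_of_mult_rec_stable]. *)
Fixpoint hom_of_mult_rec (m : P -> nat) (n : nat) p : nat :=
  if n is n'.+1 then m p + \max_(q | (q < p)%O) hom_of_mult_rec m n' q else 0.

Definition hom_of_mult (m : P -> nat) : {ffun P -> nat} :=
  [ffun p => hom_of_mult_rec m #|P| p].

Lemma hom_of_mult_rec_stable m n p :
  height p < n -> hom_of_mult_rec m n p = hom_of_mult_rec m n.+1 p.
Proof.
elim: n p => [//|n IHn] p lt_pn /=; congr addn; apply: eq_bigr => q lt_qp.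
by apply: IHn; have := height_lt lt_qp; lia.
Qed.

Lemma hom_of_multE m p : hom_of_mult m p = m p + sup_below (hom_of_mult m) p.
Proof.
rewrite ffunE hom_of_mult_rec_stable ?height_max //=.
by congr addn; apply: eq_bigr => q _; rewrite ffunE.
Qed.

Lemma hom_of_mult_isotone m : isotone (hom_of_mult m).
Proof.
move=> p q; rewrite le_eqVlt => /predU1P [-> // | lt_pq].
rewrite [leqRHS]hom_of_multE; apply: leq_trans (leq_addl _ _).
exact: (leq_bigmax_cond (P := fun r => (r < q)%O) p lt_pq).
Qed.

Lemma ascent_mult_hom_of_mult m p : ascent_mult (hom_of_mult m) p = m p.
Proof. by rewrite /ascent_mult [in X in X - _]hom_of_multE addnK. Qed.

End AscentMultiplicities.

Section MonomialIdeals.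
Context (k : fieldType) (n : nat).
Local Open Scope ring_scope.

Lemma mpolyX_inj : injective (@mpolyX n k).
Proof.
move=> a b /(congr1 (mcoeff a)); rewrite !mcoeffX eqxx.
by case: eqP => // _ /eqP; rewrite oner_eq0.
Qed.

Lemma mcoeffMX_eq0 (c : {mpoly k[n]}) a m : ~~ (a <= m)%MM -> (c * 'X_[a])@_m = 0.
Proof.
move=> not_le_am; rewrite mcoeffM big1 // => uv /eqP def_m; rewrite mcoeffX.
case: eqP => [def_a | _]; last by rewrite mulr0.
by case/negP: not_le_am; rewrite def_m -def_a lem_addl.
Qed.

Lemma in_ideal_gen_mem (G : {mpoly k[n]} -> Prop) g : G g -> in_ideal_gen G g.
Proof.
by move=> Gg; exists [:: (1, g)]; split=> [x /[!inE] /eqP -> //|]; rewrite big_seq1 mul1r.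
Qed.

Lemma in_ideal_gen_monomial (G : {mpoly k[n]} -> Prop) m :
    (forall g, G g -> exists a, g = 'X_[a]) ->
  in_ideal_gen G 'X_[m] -> exists2 a, G 'X_[a] & (a <= m)%MM.
Proof.
move=> G_monomial [s [sG def_Xm]]; apply: NNPP => no_divisor.
have /eqP := congr1 (mcoeff m) def_Xm; apply/negP.
rewrite mcoeffX eqxx raddf_sum big1_seq ?oner_eq0 // => x /andP [_ /sG Gx].
have [a def_x] := G_monomial _ Gx; rewrite def_x in Gx *.
by apply: mcoeffMX_eq0; apply/negP => le_am; apply: no_divisor; exists a.
Qed.

End MonomialIdeals.

Section AscentMonomials.
Context {d : Order.disp_t} (P : finPOrderType d) (k : fieldType).
Implicit Types (phi psi : {ffun P -> nat}) (m : 'X_{1..#|P|}).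
Local Open Scope ring_scope.

Definition ascent_mnm phi : 'X_{1..#|P|} :=
  [multinom ascent_mult phi (enum_val i) | i < #|P|].

Definition hom_of_mnm m : {ffun P -> nat} := hom_of_mult (fun p => m (enum_rank p)).

Lemma lambdabarE phi : lambdabar k phi = 'X_[ascent_mnm phi].
Proof.
rewrite /lambdabar (eq_bigr (fun p => 'X_[U_(enum_rank p)] ^+ ascent_mult phi p)).
  rewrite mprodXnE; congr 'X_[_]; apply/mnmP => i.
  rewrite mnm_sumE mnmE (bigD1 (enum_val i)) //= mulmnE mnm1E enum_valK eqxx mul1n.
  rewrite big1 ?addn0 // => p ne_pi; rewrite mulmnE mnm1E.
  by case: eqP => [def_i | _]; rewrite ?muln0 // -def_i enum_rankK eqxx in ne_pi.
move=> p _; rewrite /xvar -card_ascent -prodr_const.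
by apply: eq_bigl => i; rewrite inE.
Qed.

Lemma hom_of_mnmK : cancel hom_of_mnm ascent_mnm.
Proof. by move=> m; apply/mnmP => i; rewrite mnmE ascent_mult_hom_of_mult enum_valK. Qed.

Lemma lambdabar_hom_of_mnm m : lambdabar k (hom_of_mnm m) = 'X_[m].
Proof. by rewrite lambdabarE hom_of_mnmK. Qed.

Lemma le_hom_of_ascent_mnm psi phi : isotone psi -> isotone phi ->
  (ascent_mnm psi <= ascent_mnm phi)%MM -> forall p, (psi p <= phi p)%N.
Proof.
move=> psi_iso phi_iso /mnm_lepP le_mnm; apply: le_hom_of_ascent_mult => // p.
by have := le_mnm (enum_rank p); rewrite !mnmE enum_rankK.
Qed.

Lemma compl_in_hom_ascent_up J psi phi : hom_ideal J ->
    compl_in_hom J psi -> isotone phi -> (ascent_mnm psi <= ascent_mnm phi)%MM ->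
  compl_in_hom J phi.
Proof.
move=> [_ J_down] [psi_iso notJ_psi] phi_iso le_mnm; split=> // J_phi.
by apply/notJ_psi/(J_down phi) => //; apply: le_hom_of_ascent_mnm.
Qed.

Lemma in_Lp_monomialP J (hJ : hom_ideal J) m :
  in_Lp k J 'X_[m] <-> exists phi, compl_in_hom J phi /\ 'X_[m] = lambdabar k phi.
Proof.
split=> [|[phi [Jc_phi ->]]]; last by apply: in_ideal_gen_mem; exists phi.
case/in_ideal_gen_monomial => [_ [psi [_ ->]]|a [psi [Jc_psi]]].
  by exists (ascent_mnm psi); rewrite lambdabarE.
rewrite lambdabarE => /mpolyX_inj -> le_am; exists (hom_of_mnm m).
split; last by rewrite lambdabar_hom_of_mnm.
apply: compl_in_hom_ascent_up Jc_psi _ _ => //; last by rewrite hom_of_mnmK.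
exact: hom_of_mult_isotone.
Qed.

End AscentMonomials.

Theorem corollary3p6 (d : Order.disp_t) (P : finPOrderType d) (k : fieldType)
    (J : {ffun P -> nat} -> Prop) (hJ : hom_ideal J) :
  (forall m : 'X_{1..#|P|},
     in_Lp k J 'X_[m] <-> exists phi, compl_in_hom J phi /\ 'X_[m] = lambdabar k phi)
  /\
  (forall m : 'X_{1..#|P|},
     ~ in_Lp k J 'X_[m] <-> exists phi, isotone phi /\ J phi /\ 'X_[m] = lambdabar k phi).
Proof.
split=> m; first exact: (in_Lp_monomialP k hJ).
split=> [notLp_m | [phi [phi_iso [J_phi def_m]]] /(in_Lp_monomialP k hJ)].
  have phi_iso := hom_of_mult_isotone (fun p => m (enum_rank p)).
  exists (hom_of_mnm m); split=> //; split; last by rewrite lambdabar_hom_of_mnm.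
  apply: NNPP => notJ; apply/notLp_m/(in_Lp_monomialP k hJ).
  by exists (hom_of_mnm m); rewrite lambdabar_hom_of_mnm.
move=> [psi [Jc_psi]]; rewrite def_m !lambdabarE => /mpolyX_inj eq_mnm.
have [_] : compl_in_hom J phi.
  by apply: (compl_in_hom_ascent_up hJ Jc_psi phi_iso); rewrite eq_mnm lepm_refl.
exact.
Qed.
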